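(* Let $k$ be an algebraically closed field of characteristic $0$, $d\ge3$, $n\ge1$, and let $V_n$ have basis $v_1,\dots,v_n$ with symmetric $d$-linear form $\Theta_d(v_{i_1},\dots,v_{i_d})=1$ if $i_1+\dots+i_d=(d-1)n+1$ and $0$ otherwise. Then the center $\mathrm{Cent}_k(V_n,\Theta_d)=\{f\in\mathrm{End}_k(V_n):\Theta_d(fu_1,u_2,\dots,u_d)=\Theta_d(u_1,fu_2,\dots,u_d)\ \forall u_i\}$ is a maximal commutative subalgebra of $\mathrm{End}_k(V_n)$.
   Context: The map $\psi(v_i)=v_{i-1}$ ($v_0=0$) belongs to the center, and the center equals $k[\psi]$. *)

From HB Require Import structures.
From mathcomp Require Import all_boot all_order all_algebra.
Set Implicit Arguments. Unset Strict Implicit. Unset Printing Implicit Defensive.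
Import GRing.Theory.
Local Open Scope ring_scope.

(* V_n = row vectors 'rV[k]_n; basis vector v_{i+1} is delta at index i : 'I_n
   (0-based).  Endomorphisms are matrices acting on the right: f u := u *m f. *)

(* The symmetric d-linear form Theta_d, as the multilinear extension of
   Theta_d(v_{i_1},...,v_{i_d}) = [i_1+...+i_d = (d-1)n+1]. *)
Definition Theta (k : fieldType) (d n : nat) (u : 'I_d -> 'rV[k]_n) : k :=
  \sum_(s : {ffun 'I_d -> 'I_n} | (\sum_(j < d) (s j).+1)%N == ((d - 1) * n + 1)%N)
     \prod_(j < d) u j 0 (s j).

Definition upd (k : fieldType) (d n : nat) (u : 'I_d -> 'rV[k]_n) (i : 'I_d)
  (f : 'M[k]_n) : 'I_d -> 'rV[k]_n :=
  fun j => if j == i then u j *m f else u j.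

Definition Cent (k : fieldType) (d n : nat) (f : 'M[k]_n) : Prop :=
  forall (i0 i1 : 'I_d), nat_of_ord i0 = 0%N -> nat_of_ord i1 = 1%N ->
  forall u : 'I_d -> 'rV[k]_n, Theta (upd u i0 f) = Theta (upd u i1 f).

Definition is_subalgebra (k : fieldType) (n : nat) (A : 'M[k]_n -> Prop) : Prop :=
  [/\ A 1%:M,
      (forall f g, A f -> A g -> A (f + g)),
      (forall (c : k) f, A f -> A (c *: f)) &
      (forall f g, A f -> A g -> A (f *m g))].

Definition is_commutative (k : fieldType) (n : nat) (A : 'M[k]_n -> Prop) : Prop :=
  forall f g, A f -> A g -> f *m g = g *m f.

Definition maximal_commutative_subalgebra (k : fieldType) (n : nat)
  (A : 'M[k]_n -> Prop) : Prop :=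
  [/\ is_subalgebra A, is_commutative A &
      forall B : 'M[k]_n -> Prop, is_subalgebra B -> is_commutative B ->
        (forall f, A f -> B f) -> forall f, B f -> A f].

From HB Require Import structures.
From mathcomp Require Import all_boot all_order all_algebra.
From mathcomp Require Import zify.
Set Implicit Arguments. Unset Strict Implicit. Unset Printing Implicit Defensive.
Import GRing.Theory.
Local Open Scope ring_scope.

(* Expanding Theta in the basis, Theta(u_1, .., f u_i, .., u_d) is a linear
   combination of the monomials u_1[t_1] .. u_d[t_d] whose coefficients are
   single entries of f, selected by the degree condition of Theta; so f is
   central iff these coefficients do not depend on the slot i. Lower triangular
   Toeplitz matrices pass this test. Conversely, when d >= 3, comparing slots 0
   and 1 on suitable basis tuples identifies every entry f[a, b] with 0 if b > a
   and otherwise with an entry of the last row depending only on a - b. Lower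
   triangular Toeplitz matrices are the polynomials in the shift psi, hence they
   commute, and they are also the matrices commuting with psi. So the center is
   a commutative algebra equal to the centralizer of one of its elements, which
   makes it maximal commutative. *)

Lemma centralizer_maximal_commutative (k : fieldType) (n : nat)
    (A : 'M[k]_n -> Prop) (p : 'M[k]_n) :
  (forall f, A f <-> f *m p = p *m f) -> is_commutative A ->
  maximal_commutative_subalgebra A.
Proof.
move=> Ap A_comm; split=> //.
- split=> [|f g /Ap fp /Ap gp|c f /Ap fp|f g /Ap fp /Ap gp]; apply/Ap.
  + by rewrite mul1mx mulmx1.
  + by rewrite mulmxDl mulmxDr fp gp.
  + by rewrite -scalemxAl fp scalemxAr.
  + by rewrite -mulmxA gp !mulmxA fp.
- move=> B _ B_comm AB f Bf; apply/Ap/B_comm => //.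
  by apply/AB/Ap.
Qed.

Local Notation theta_deg d n := ((d - 1) * n + 1)%N.

Section ThetaCoefficients.
Variables (k : fieldType) (d n : nat).
Implicit Types (t : {ffun 'I_d -> 'I_n}) (i : 'I_d) (x : 'I_n) (f : 'M[k]_n).

Definition ffun_set t i x : {ffun 'I_d -> 'I_n} :=
  [ffun j => if j == i then x else t j].

Definition weight t : nat := \sum_(j < d) (t j).+1.

Definition Theta_coef i f t : k :=
  \sum_(x | weight (ffun_set t i x) == theta_deg d n) f (t i) x.

Definition monomial (u : 'I_d -> 'rV[k]_n) t : k := \prod_(j < d) u j 0 (t j).

Lemma ffun_set_eq t i x : ffun_set t i x i = x.
Proof. by rewrite ffunE eqxx. Qed.

Lemma ffun_set_neq t i x j : j != i -> ffun_set t i x j = t j.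
Proof. by rewrite ffunE => /negbTE->. Qed.

Lemma ffun_setK t i x : ffun_set (ffun_set t i x) i (t i) = t.
Proof. by apply/ffunP => j; rewrite !ffunE; case: eqP => [->|]. Qed.

Lemma weight_set t i x : (weight (ffun_set t i x) + t i = weight t + x)%N.
Proof.
rewrite /weight (bigD1 i) //= [in RHS](bigD1 i) //= ffun_set_eq.
under eq_bigr => j /ffun_set_neq -> do []; lia.
Qed.

Lemma weight_le t i : (weight t <= theta_deg d n + t i)%N.
Proof.
have sum_n : (\sum_(j < d | j != i) n = (d - 1) * n)%N.
  by rewrite sum_nat_const cardC1 card_ord subn1.
rewrite /weight (bigD1 i) //= -sum_n addnAC addn1 addnC addnS ltnS leq_add2r.
by apply: leq_sum => j _; exact: ltn_ord.
Qed.

Lemma Theta_updE (u : 'I_d -> 'rV[k]_n) i f :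
  Theta (upd u i f) = \sum_t monomial u t * Theta_coef i f t.
Proof.
pose swap (p : {ffun 'I_d -> 'I_n} * 'I_n) := (ffun_set p.1 i p.2, p.1 i).
have swapK : involutive swap.
  by move=> [t x]; rewrite /swap /= ffun_set_eq ffun_setK.
rewrite /Theta -/weight.
rewrite (eq_bigr (fun s : {ffun _} =>
  \sum_c f c (s i) * monomial u (ffun_set s i c))); last first.
  move=> s _; rewrite (bigD1 i) //= {1}/upd eqxx mxE big_distrl /=.
  apply: eq_bigr => c _.
  rewrite /monomial [in RHS](bigD1 i) //= ffun_set_eq mulrAC mulrC.
  congr (_ * (_ * _)); apply: eq_bigr => j ji.
  by rewrite /upd (negbTE ji) ffun_set_neq.
rewrite pair_big_dep (reindex_inj (inv_inj swapK)) /=.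
under [RHS]eq_bigr => t _ do rewrite /Theta_coef big_distrr.
rewrite pair_big_dep; apply: eq_big => [[t x]|[t x] _] /=.
  by rewrite andbT.
by rewrite ffun_set_eq ffun_setK mulrC.
Qed.

Lemma monomial_delta t0 t : monomial (fun j => delta_mx 0 (t0 j)) t = (t == t0)%:R.
Proof.
rewrite /monomial; have [-> | neq_t] := eqVneq t t0.
  by rewrite big1 // => j _; rewrite mxE !eqxx.
have [j neq_tj] : exists j, t j != t0 j.
  apply/existsP; apply: contraNT neq_t => /existsPn eq_t.
  by apply/eqP/ffunP => j; apply/eqP/negPn.
by rewrite (bigD1 j) //= mxE eqxx (negbTE neq_tj) mul0r.
Qed.

Lemma Theta_upd_delta t i f :
  Theta (upd (fun j => delta_mx 0 (t j)) i f) = Theta_coef i f t.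
Proof.
rewrite Theta_updE (bigD1 t) //= monomial_delta eqxx mul1r big1 ?addr0 //.
by move=> t' /negbTE neq_t; rewrite monomial_delta neq_t mul0r.
Qed.

Lemma Theta_coef_eq i f t x :
  x = (theta_deg d n + t i - weight t)%N :> nat -> Theta_coef i f t = f (t i) x.
Proof.
move=> x_eq; have := weight_le t i; have := weight_set t i x => wx wle.
rewrite /Theta_coef (big_pred1 x) // => y /=.
have := weight_set t i y => wy.
by apply/eqP/eqP => [wy_deg|->]; first apply: val_inj => /=; lia.
Qed.

Lemma Theta_coef_out i f t :
  (n <= theta_deg d n + t i - weight t)%N -> Theta_coef i f t = 0.
Proof.
move=> out; rewrite /Theta_coef big_pred0 // => y; apply/eqP => wy.
have := weight_set t i y; have := ltn_ord y; lia.
Qed.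

Lemma Theta_coef_Cent f :
  (forall i j t, Theta_coef i f t = Theta_coef j f t) -> Cent d f.
Proof.
move=> coef_eq i0 i1 _ _ u; rewrite !Theta_updE.
by apply: eq_bigr => t _; rewrite (coef_eq i0 i1).
Qed.

End ThetaCoefficients.

Section LowerToeplitz.
Variables (k : fieldType) (n : nat).
Implicit Types (f : 'M[k]_n.+1) (c : nat -> k).

Definition lower_toeplitz c : 'M[k]_n.+1 :=
  \matrix_(a, b) if (b <= a)%N then c (a - b)%N else 0.

Definition shift : 'M[k]_n.+1 := lower_toeplitz (fun m => (m == 1)%:R).

Lemma shiftE a b : shift a b = (a == b.+1 :> nat)%:R.
Proof.
rewrite mxE; case: leqP => [le_ba | lt_ab].
  by congr (_%:R); apply/eqP/eqP; lia.
by case: eqP => //; lia.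
Qed.

Lemma mulmx_shift f a b :
  (f *m shift) a b = if (b < n)%N then f a (inord b.+1) else 0.
Proof.
rewrite mxE; case: ltnP => [lt_bn | le_nb].
  rewrite (bigD1 (inord b.+1)) //= shiftE inordK // eqxx mulr1.
  rewrite big1 ?addr0 // => c c_neq.
  rewrite shiftE; case: eqP => [c_eq | _]; last by rewrite mulr0.
  by case/eqP: c_neq; apply: val_inj; rewrite /= inordK.
rewrite big1 // => c _.
rewrite shiftE; case: eqP => [c_eq | _]; last by rewrite mulr0.
by have := ltn_ord c; lia.
Qed.

Lemma shift_mulmx f a b :
  (shift *m f) a b = if (0 < a)%N then f (inord a.-1) b else 0.
Proof.
have lt_an := ltn_ord a.
rewrite mxE; case: posnP => [a0 | a_gt0].
  by rewrite big1 // => c _; rewrite shiftE a0 mul0r.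
rewrite (bigD1 (inord a.-1)) //= shiftE inordK ?prednK ?eqxx ?mul1r //; last by lia.
rewrite big1 ?addr0 // => c c_neq.
rewrite shiftE; case: eqP => [c_eq | _]; last by rewrite mul0r.
by case/eqP: c_neq; apply: val_inj; rewrite /= inordK; lia.
Qed.

Lemma shift_expE m a b : (shift ^+ m) a b = (a == (b + m)%N :> nat)%:R.
Proof.
elim: m a b => [|m IHm] a b; first by rewrite expr0 mxE addn0.
rewrite exprSr mulmx_shift; case: ltnP => [lt_bn | le_nb].
  by rewrite IHm inordK // addSnnS.
by have := ltn_ord a; case: eqP => //; lia.
Qed.

Lemma lower_toeplitz_horner c :
  lower_toeplitz c = horner_mx shift (\poly_(i < n.+1) c i).
Proof.
apply/matrixP => a b; rewrite poly_def rmorph_sum /= summxE mxE.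
under eq_bigr => i _ do rewrite horner_mxZ rmorphXn /= horner_mx_X mxE shift_expE.
case: leqP => [le_ba | lt_ab]; last first.
  by rewrite big1 // => i _; case: eqP => [|_]; [lia | rewrite mulr0].
have lt_abn : (a - b < n.+1)%N by have := ltn_ord a; lia.
rewrite (bigD1 (Ordinal lt_abn)) //= subnKC // eqxx mulr1.
rewrite big1 ?addr0 // => i i_neq.
case: eqP => [a_eq | _]; last by rewrite mulr0.
by case/eqP: i_neq; apply: val_inj => /=; lia.
Qed.

Lemma lower_toeplitzC c c' :
  lower_toeplitz c *m lower_toeplitz c' = lower_toeplitz c' *m lower_toeplitz c.
Proof. by rewrite !lower_toeplitz_horner; apply: comm_horner_mx2. Qed.

Lemma commute_shift_lower_toeplitz f :
  f *m shift = shift *m f -> exists c, f = lower_toeplitz c.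
Proof.
move=> f_shift; exists (fun m => f (inord m) ord0).
suff col_eq b (a : 'I_n.+1) : (b <= n)%N ->
    f a (inord b) = if (b <= a)%N then f (inord (a - b)) ord0 else 0.
  by apply/matrixP => a b; rewrite mxE -col_eq ?inord_val // -ltnS.
elim: b a => [|b IHb] a le_bn.
  by rewrite subn0 inord_val; congr (f _ _); apply: val_inj; rewrite /= inordK.
have := congr1 (fun M : 'M_n.+1 => M a (inord b)) f_shift.
rewrite /= mulmx_shift shift_mulmx inordK ?le_bn; last by lia.
case: a => [[|a] lt_an] /= ->; rewrite ?IHb ?inordK //; lia.
Qed.

End LowerToeplitz.

Arguments lower_toeplitz {k n}.
Arguments shift {k n}.

Section CentLowerToeplitz.
Variables (k : fieldType) (d n : nat).
Implicit Types (f : 'M[k]_n.+1) (c : nat -> k).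
Implicit Types (i : 'I_d) (t : {ffun 'I_d -> 'I_n.+1}).

Lemma Theta_coef_lower_toeplitz c i t :
  Theta_coef i (lower_toeplitz c) t =
  if (theta_deg d n.+1 <= weight t)%N then c (weight t - theta_deg d n.+1)%N else 0.
Proof.
have := weight_le t i; have := ltn_ord (t i) => lt_ti le_w.
case: (ltnP (theta_deg d n.+1 + t i - weight t) n.+1) => [x_lt | x_ge].
  rewrite (Theta_coef_eq _ (x := Ordinal x_lt)) // mxE /=.
  by case: leqP => ?; case: leqP => ? //; [congr c | ..]; lia.
by rewrite Theta_coef_out //; case: leqP => //; lia.
Qed.

Lemma Cent_lower_toeplitz c : Cent d (lower_toeplitz c : 'M[k]_n.+1).
Proof. by apply: Theta_coef_Cent => i j t; rewrite !Theta_coef_lower_toeplitz. Qed.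

Lemma Cent_is_lower_toeplitz f :
  (3 <= d)%N -> Cent d f -> exists c, f = lower_toeplitz c.
Proof.
move=> d_ge3 f_Cent; exists (fun m => f ord_max (inord (n - m))).
apply/matrixP => a b; rewrite mxE.
have lt_an := ltn_ord a; have lt_bn := ltn_ord b.
pose i0 : 'I_d := Ordinal (leq_trans (isT : 1 <= 3)%N d_ge3).
pose i1 : 'I_d := Ordinal (leq_trans (isT : 2 <= 3)%N d_ge3).
pose i2 : 'I_d := Ordinal d_ge3.
(* In t = (a, n, n - b, n, .., n), slot 0 reads f[a, b] and slot 1 reads
   f[n, n - (a - b)] (or 0 if b > a). *)
pose t_max : {ffun 'I_d -> 'I_n.+1} := [ffun=> ord_max].
pose t := ffun_set (ffun_set t_max i0 a) i2 (inord (n - b)).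
have t_i0 : t i0 = a by rewrite ffun_set_neq // ffun_set_eq.
have t_i1 : t i1 = ord_max by rewrite !ffun_set_neq // ffunE.
have dN : (d * n.+1 = (d - 2) * n.+1 + n.+1 + n.+1)%N.
  by rewrite -!mulSnr; congr (_ * _)%N; lia.
have degE : ((d - 1) * n.+1 = (d - 2) * n.+1 + n.+1)%N.
  by rewrite -mulSnr; congr (_ * _)%N; lia.
have weight_t : (weight t = a.+1 + (n - b).+1 + (d - 2) * n.+1)%N.
  have weight_max : weight t_max = (d * n.+1)%N.
    rewrite /weight; under eq_bigr => j _ do rewrite ffunE.
    by rewrite sum_nat_const card_ord.
  have := weight_set (ffun_set t_max i0 a) i2 (inord (n - b)).
  have := weight_set t_max i0 a.
  rewrite ffun_set_neq // !ffunE weight_max inordK /= -/t; lia.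
have coef_eq := f_Cent i0 i1 erefl erefl (fun j => delta_mx 0 (t j)).
rewrite !Theta_upd_delta (Theta_coef_eq _ (x := b)) t_i0 in coef_eq; last first.
  by rewrite weight_t degE; lia.
rewrite coef_eq; case: leqP => [le_ba | lt_ab].
  rewrite (Theta_coef_eq _ (x := inord (n - (a - b)))) t_i1 //.
  by rewrite weight_t inordK /=; lia.
by rewrite Theta_coef_out // t_i1 weight_t /=; lia.
Qed.

Lemma Cent_lower_toeplitzP f :
  (3 <= d)%N -> Cent d f <-> exists c, f = lower_toeplitz c.
Proof.
move=> d_ge3; split=> [|[c ->]]; last exact: Cent_lower_toeplitz.
exact: Cent_is_lower_toeplitz.
Qed.

End CentLowerToeplitz.

Theorem lemma3p4 (k : closedFieldType) (d n : nat) :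
  [pchar k] =i pred0 -> (3 <= d)%N -> (1 <= n)%N ->
  maximal_commutative_subalgebra (@Cent k d n).
Proof.
move=> _ d_ge3; case: n => [//|n] _.
have CentP f := @Cent_lower_toeplitzP k d n f d_ge3.
apply: (centralizer_maximal_commutative (p := shift)) => [f | f g].
  rewrite CentP; split=> [[c ->] | /commute_shift_lower_toeplitz //].
  exact: lower_toeplitzC.
by move=> /CentP[c ->] /CentP[c' ->]; apply: lower_toeplitzC.
Qed.
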